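(* Let $\mathcal{U}\subset\mathbb{R}^n\times\mathbb{R}^p$ be open, let $\mathcal{D}\subset\mathcal{U}$ be nonempty, let $\Gamma:\mathcal{D}\times\mathbb{R}^m\rightrightarrows\mathbb{R}^q$ be such that $\Gamma(\xi,\cdot)$ is positively homogeneous for every $\xi\in\mathcal{D}$, let $\mathcal{A}:\mathcal{U}\to\mathbb{R}^{q\times m}$, and define $\varXi:\mathcal{D}\times\mathbb{R}^m\rightrightarrows\mathbb{R}^q$ by $\varXi(\xi,z):=\mathcal{A}(\xi)z+\Gamma(\xi,z)$. Let $\bar\xi\in\mathcal{D}$ and $\omega\in\mathbb{R}^n\times\mathbb{R}^p$, put $H:=\Gamma(\bar\xi,\cdot)$, $\mathcal{Z}:=\mathrm{bd}\,\mathbb{B}\cap\mathrm{dom}\,H$, $\mathcal{Z}_0:=\{z\in\mathcal{Z}\mid 0\in\mathcal{A}(\bar\xi)z+H(z)\}$ and $\varTheta:=\mathrm{cl}\big(\mathrm{cone}\big(\bigcup_{z\in\mathcal{Z}}H(z)\big)\big)$, and assume: (i) $\bar\xi$ is $\varXi$-singular; (ii) $\Gamma$ is outer semicontinuous; (iii) $\mathcal{A}$ is semidifferentiable at $\bar\xi$ for $\omega$; (iv) the set $\mathcal{A}(\bar\xi)\,\mathrm{dom}\,H$ is closed; (v) there exists $c\ge0$ such that for every $z\in\mathcal{Z}_0$ there are $\varepsilon,\delta>0$ with $\Gamma(\xi,z')\cap\delta\mathbb{B}\subset\Gamma(\bar\xi,z')+c\|\xi-\bar\xi\|\mathbb{B}$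 whenever $(\xi,z')\in(\mathcal{D}\times\mathrm{bd}\,\mathbb{B})\cap((\bar\xi,z)+\varepsilon\mathbb{B})$; (vi) $\big(\mathcal{A}(\bar\xi)\,\mathrm{dom}\,H\big)\cap(-\varTheta)\subset\{0\}$. Then, with $c\ge0$ from (v), \[ d\ell_\varXi(\bar\xi)(\omega)+c\|\omega\|\ \ge\ \min_{z\in\mathcal{Z}_0}\mathrm{dist}\big[0,\ \mathcal{A}'(\bar\xi;\omega)z+\varTheta+\mathcal{A}(\bar\xi)\,\mathrm{dom}\,H\big]. \]
   Context: $\|\cdot\|$ is the Euclidean norm, $\mathbb{B}$ the closed unit ball, $\mathrm{bd}$ the boundary, $\mathrm{cl}$ the closure, $\mathrm{dist}[\xi,Z]$ the distance (with $\mathrm{dist}[\xi,\emptyset]=\infty$), and $\mathrm{cone}(Z):=\bigcup_{\gamma\ge0}\gamma Z$. A set-valued map $H$ is positively homogeneous if $H(\gamma z)=\gamma H(z)$ for all $\gamma>0$ and all $z$. $\Gamma$ is outer semicontinuous if $\limsup_{(\xi',z')\to(\xi,z),\,(\xi',z')\in\mathcal{D}\times\mathbb{R}^m}\Gamma(\xi',z')\subset\Gamma(\xi,z)$ (Painlevé–Kuratowski outer limit) for all $(\xi,z)\in\mathcal{D}\times\mathbb{R}^m$. The least singular value (LSV) function of $\varXi$ is $\ell_\varXi:\mathbb{R}^n\times\mathbb{R}^p\to[0,\infty]$, $\ell_\varXi(\xi):=\infty$ if $\xi\notin\mathcal{D}$ and $\ell_\varXi(\xi):=\inf_{\|z\|=1}\mathrm{dist}[0,\varXi(\xi,z)]$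 if $\xi\in\mathcal{D}$. A point $\bar\xi\in\mathcal{D}$ is $\varXi$-singular if $0\in\varXi(\bar\xi,z)$ for some $z\neq0$. The semiderivative of a single-valued map $\mathcal{A}$ at $\xi\in\mathrm{int}(\mathrm{dom}\,\mathcal{A})$ for $\omega$ is $\mathcal{A}'(\xi;\omega):=\lim_{\tau\searrow0,\omega'\to\omega}(\mathcal{A}(\xi+\tau\omega')-\mathcal{A}(\xi))/\tau$; $\mathcal{A}$ is semidifferentiable at $\xi$ for $\omega$ if this limit exists. The subderivative of $\varphi:\mathbb{R}^N\to\mathbb{R}\cup\{\infty\}$ at $\xi\in\mathrm{dom}\,\varphi$ in direction $\omega$ is $d\varphi(\xi)(\omega):=\liminf_{\tau\searrow0,\omega'\to\omega}(\varphi(\xi+\tau\omega')-\varphi(\xi))/\tau$. *)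

From HB Require Import structures.
From mathcomp Require Import all_boot all_order all_algebra.
From mathcomp Require Import all_classical all_reals.
From mathcomp Require Import ereal.
Set Implicit Arguments. Unset Strict Implicit. Unset Printing Implicit Defensive.
Import Order.TTheory GRing.Theory Num.Theory.
Local Open Scope classical_set_scope.
Local Open Scope ring_scope.

Section Defs.
Variable R : realType.

Definition enorm (a b : nat) (v : 'M[R]_(a, b)) : R :=
  Num.sqrt (\sum_(i < a) \sum_(j < b) v i j ^+ 2).

Definition pnorm (k l : nat) (x : 'cV[R]_k) (y : 'cV[R]_l) : R :=
  Num.sqrt (enorm x ^+ 2 + enorm y ^+ 2).

(* distance to a set, with dist[x, set0] = +oo *)
Definition edist (k : nat) (x : 'cV[R]_k) (S : set 'cV[R]_k) : \bar R :=
  ereal_inf [set (enorm (x - y))%:E | y in S].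

Definition is_open (k : nat) (U : set 'cV[R]_k) : Prop :=
  forall x, U x -> exists e : R, 0 < e /\ forall y, enorm (y - x) < e -> U y.

Definition eclosure (k : nat) (S : set 'cV[R]_k) : set 'cV[R]_k :=
  [set x | forall e : R, 0 < e -> exists2 y, S y & enorm (x - y) < e].

Definition is_closed (k : nat) (S : set 'cV[R]_k) : Prop :=
  eclosure S `<=` S.

Definition cone (k : nat) (S : set 'cV[R]_k) : set 'cV[R]_k :=
  [set x | exists g : R, 0 <= g /\ exists2 y, S y & x = g *: y].

Definition msum (k : nat) (S T : set 'cV[R]_k) : set 'cV[R]_k :=
  [set x | exists2 a, S a & exists2 b, T b & x = a + b].

Definition sscale (k : nat) (g : R) (S : set 'cV[R]_k) : set 'cV[R]_k :=
  [set g *: y | y in S].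

Definition sdom (k l : nat) (H : 'cV[R]_k -> set 'cV[R]_l) : set 'cV[R]_k :=
  [set z | H z !=set0].

Definition unit_sphere (k : nat) : set 'cV[R]_k := [set z | enorm z = 1].

Definition pos_homogeneous (k l : nat) (H : 'cV[R]_k -> set 'cV[R]_l) : Prop :=
  forall (g : R) z, 0 < g -> H (g *: z) = sscale g (H z).

Definition vcvg (k : nat) (u : nat -> 'cV[R]_k) (x : 'cV[R]_k) : Prop :=
  forall e : R, 0 < e -> exists N, forall i, (N <= i)%N -> enorm (u i - x) < e.

Definition outer_semicontinuous (N m q : nat) (D : set 'cV[R]_N)
  (Gam : 'cV[R]_N -> 'cV[R]_m -> set 'cV[R]_q) : Prop :=
  forall xi z, D xi ->
    forall y, (exists (xs : nat -> 'cV[R]_N) (zs : nat -> 'cV[R]_m)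
                      (ys : nat -> 'cV[R]_q),
                 (forall i, D (xs i)) /\ vcvg xs xi /\ vcvg zs z /\ vcvg ys y /\
                 (forall i, Gam (xs i) (zs i) (ys i))) ->
    Gam xi z y.

Definition XiMap (N m q : nat) (A : 'cV[R]_N -> 'M[R]_(q, m))
  (Gam : 'cV[R]_N -> 'cV[R]_m -> set 'cV[R]_q) (xi : 'cV[R]_N) (z : 'cV[R]_m)
  : set 'cV[R]_q := [set A xi *m z + y | y in Gam xi z].

Definition singular (N m q : nat) (D : set 'cV[R]_N)
  (Xi : 'cV[R]_N -> 'cV[R]_m -> set 'cV[R]_q) (xi : 'cV[R]_N) : Prop :=
  D xi /\ exists z : 'cV[R]_m, z != 0 /\ Xi xi z 0.

Definition lsv (N m q : nat) (D : set 'cV[R]_N)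
  (Xi : 'cV[R]_N -> 'cV[R]_m -> set 'cV[R]_q) (xi : 'cV[R]_N) : \bar R :=
  if `[< D xi >] then
    ereal_inf [set edist 0 (Xi xi z) | z in @unit_sphere m]
  else +oo%E.

Definition is_semideriv (N q m : nat) (A : 'cV[R]_N -> 'M[R]_(q, m))
  (xi w : 'cV[R]_N) (L : 'M[R]_(q, m)) : Prop :=
  forall e : R, 0 < e -> exists2 d : R, 0 < d &
    forall (tau : R) (w' : 'cV[R]_N), 0 < tau -> tau < d -> enorm (w' - w) < d ->
      enorm (tau^-1 *: (A (xi + tau *: w') - A xi) - L) < e.

Definition semidifferentiable (N q m : nat) (A : 'cV[R]_N -> 'M[R]_(q, m))
  (xi w : 'cV[R]_N) : Prop := exists L, is_semideriv A xi w L.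

Definition subderiv (N : nat) (phi : 'cV[R]_N -> \bar R) (xi w : 'cV[R]_N)
  : \bar R :=
  ereal_sup [set ereal_inf
     [set r : \bar R | exists (tau : R) (w' : 'cV[R]_N),
        [/\ 0 < tau, tau < d, enorm (w' - w) < d &
            r = ((phi (xi + tau *: w')%R - phi xi) * (tau^-1)%:E)%E]]
   | d in [set d : R | 0 < d]].

End Defs.

(** Positive homogeneity of [H] and the transversality (vi) force [A xib z = 0] and
    [0 \in H z] for every [z] in [Z0]; outer semicontinuity makes [Z0] a nonempty closed
    subset of the unit sphere.  The map [g z = dist(0, Aw z + Theta + A xib dom H)] is
    [|Aw|]-Lipschitz, so it attains its minimum [r] on [Z0].  If the subderivative of the
    least singular value plus [c |w|] were below some [L < r], difference quotients would
    provide [tau_k -> 0], [w_k -> w] and unit vectors [z_k] with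
    [dist(0, Xi(xib + tau_k w_k, z_k)) < L tau_k].  A limit point [z] of the [z_k] lies in
    [Z0] by outer semicontinuity; near it, (v) trades the [Gam]-part of the witness for
    some [h \in H z_k] at cost [c tau_k |w_k|], and dividing by [tau_k] (homogeneity again)
    yields a point of [Aw z_k + Theta + A xib dom H] of norm about [L + c |w|].  Hence
    [g z < r], a contradiction. *)

From HB Require Import structures.
From mathcomp Require Import all_boot all_order all_algebra.
From mathcomp Require Import all_classical all_reals.
From mathcomp Require Import ereal topology normedtype.
From mathcomp Require Import ring lra.
Set Implicit Arguments. Unset Strict Implicit. Unset Printing Implicit Defensive.
Import Order.TTheory GRing.Theory Num.Theory.
Import numFieldTopology.Exports numFieldNormedType.Exports.
Local Open Scope classical_set_scope.
Local Open Scope ring_scope.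

Section EuclideanNorm.
Variable R : realType.

Lemma cauchy_schwarz (I : finType) (f g : I -> R) :
  (\sum_i f i * g i) ^+ 2 <= (\sum_i f i ^+ 2) * (\sum_i g i ^+ 2).
Proof.
set F := \sum_i f i ^+ 2; set G := \sum_i g i ^+ 2; set P := \sum_i f i * g i.
have F_ge0 : 0 <= F by apply: sumr_ge0 => i _; exact: sqr_ge0.
have [F0 | F_neq0] := eqVneq F 0.
  have f0 i : f i = 0.
    apply/eqP; rewrite -sqrf_eq0; apply/eqP.
    by apply: (psumr_eq0P _ F0) => // j _; exact: sqr_ge0.
  have -> : P = 0 by rewrite /P big1 // => i _; rewrite f0 mul0r.
  by rewrite expr0n /= F0 mul0r.
have expand : F * (F * G - P ^+ 2) = \sum_i (F * g i - P * f i) ^+ 2.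
  rewrite (eq_bigr (fun i => F ^+ 2 * g i ^+ 2 - 2 * F * P * (f i * g i)
                             + P ^+ 2 * f i ^+ 2)) => [|i _]; last by ring.
  by rewrite big_split sumrB /= -!mulr_sumr -/F -/G -/P; ring.
have : 0 <= F * (F * G - P ^+ 2).
  by rewrite expand; apply: sumr_ge0 => i _; exact: sqr_ge0.
by rewrite pmulr_rge0 ?subr_ge0 // lt_neqAle eq_sym F_neq0.
Qed.

Section Matrices.
Variables a b : nat.
Implicit Types u v : 'M[R]_(a, b).

Lemma enorm_ge0 v : 0 <= enorm v.
Proof. exact: sqrtr_ge0. Qed.

Lemma enorm_sqrE v : enorm v ^+ 2 = \sum_i \sum_j v i j ^+ 2.
Proof.
rewrite /enorm sqr_sqrtr //.
by apply: sumr_ge0 => i _; apply: sumr_ge0 => j _; exact: sqr_ge0.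
Qed.

Lemma enorm_sqr_pair v : enorm v ^+ 2 = \sum_(p : 'I_a * 'I_b) v p.1 p.2 ^+ 2.
Proof. by rewrite enorm_sqrE pair_bigA. Qed.

Lemma enorm0 : enorm (0 : 'M[R]_(a, b)) = 0.
Proof.
by rewrite /enorm big1 ?sqrtr0 // => i _; rewrite big1 // => j _; rewrite mxE expr0n.
Qed.

Lemma enormZ k v : enorm (k *: v) = `|k| * enorm v.
Proof.
rewrite /enorm -sqrtr_sqr -sqrtrM ?sqr_ge0 // mulr_sumr.
by congr Num.sqrt; apply: eq_bigr => i _; rewrite mulr_sumr;
  apply: eq_bigr => j _; rewrite mxE exprMn.
Qed.

Lemma enormN v : enorm (- v) = enorm v.
Proof. by rewrite -scaleN1r enormZ normrN1 mul1r. Qed.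

Lemma enorm_distC u v : enorm (u - v) = enorm (v - u).
Proof. by rewrite -enormN opprB. Qed.

Lemma enormD u v : enorm (u + v) <= enorm u + enorm v.
Proof.
set S := \sum_(p : 'I_a * 'I_b) u p.1 p.2 * v p.1 p.2.
have S_le : S <= enorm u * enorm v.
  apply: le_trans (ler_norm S) _.
  rewrite -ler_sqr ?nnegrE ?mulr_ge0 ?enorm_ge0 // real_normK ?num_real //.
  by rewrite exprMn !enorm_sqr_pair; exact: cauchy_schwarz.
have expand : enorm (u + v) ^+ 2 = enorm u ^+ 2 + 2 * S + enorm v ^+ 2.
  rewrite !enorm_sqr_pair mulr_sumr -!big_split /=.
  by apply: eq_bigr => p _; rewrite mxE; ring.
rewrite -ler_sqr ?nnegrE ?addr_ge0 ?enorm_ge0 // expand sqrrD.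
by rewrite lerD2r lerD2l mulr_natl lerMn2r S_le orbT.
Qed.

Lemma enormB_le u v : enorm (u - v) <= enorm u + enorm v.
Proof. by rewrite -(enormN v) enormD. Qed.

Lemma enorm_le_add_dist u v : enorm u <= enorm v + enorm (u - v).
Proof. by rewrite -{1}(subrKC v u) enormD. Qed.

Lemma enorm_entry_le v i j : `|v i j| <= enorm v.
Proof.
rewrite -ler_sqr ?nnegrE ?enorm_ge0 // real_normK ?num_real // enorm_sqrE.
rewrite (bigD1 i) //= (bigD1 j) //= -addrA lerDl.
apply: addr_ge0; first by apply: sumr_ge0 => k _; exact: sqr_ge0.
by apply: sumr_ge0 => k _; apply: sumr_ge0 => l _; exact: sqr_ge0.
Qed.

Lemma enorm_eq0 v : enorm v = 0 -> v = 0.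
Proof.
move=> v0; apply/matrixP => i j; rewrite mxE.
by apply/eqP; rewrite -normr_le0 -v0 enorm_entry_le.
Qed.

Lemma enorm_le_entries v (e : R) : 0 <= e -> (forall i j, `|v i j| <= e) ->
  enorm v <= (a * b)%:R * e.
Proof.
move=> e_ge0 ve.
rewrite -ler_sqr ?nnegrE ?mulr_ge0 ?enorm_ge0 // enorm_sqr_pair.
apply: (@le_trans _ _ (\sum_(p : 'I_a * 'I_b) e ^+ 2)).
  apply: ler_sum => p _.
  by rewrite -real_normK ?num_real // ler_sqr ?nnegrE.
have ab_le : (a * b <= (a * b) ^ 2)%N.
  by case: (a * b)%N => // k; rewrite expnS expn1 leq_pmulr.
have -> : ((a * b)%:R * e) ^+ 2 = e ^+ 2 * ((a * b) ^ 2)%:R by rewrite natrX; ring.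
by rewrite sumr_const card_prod !card_ord -[_ *+ _]mulr_natr ler_wpM2l ?sqr_ge0 // ler_nat.
Qed.

End Matrices.

Lemma enorm_mulmx a b c (M : 'M[R]_(a, b)) (N : 'M[R]_(b, c)) :
  enorm (M *m N) <= enorm M * enorm N.
Proof.
rewrite -ler_sqr ?nnegrE ?mulr_ge0 ?enorm_ge0 // exprMn !enorm_sqrE.
rewrite [X in _ <= _ * X]exchange_big /= mulr_suml.
apply: ler_sum => i _; rewrite mulr_sumr; apply: ler_sum => k _.
by rewrite mxE; exact: cauchy_schwarz.
Qed.

Lemma pnorm_le k l (x : 'cV[R]_k) (y : 'cV[R]_l) : pnorm x y <= enorm x + enorm y.
Proof.
rewrite -ler_sqr ?nnegrE ?addr_ge0 ?enorm_ge0 ?sqrtr_ge0 //.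
rewrite sqr_sqrtr ?addr_ge0 ?sqr_ge0 // sqrrD lerD2r lerDl.
by rewrite mulrn_wge0 // mulr_ge0 ?enorm_ge0.
Qed.

End EuclideanNorm.

Section Sequences.
Variable R : realType.
Local Notation iv j := (((j.+1)%:R : R)^-1).

Lemma invS_gt0 j : 0 < iv j.
Proof. by rewrite invr_gt0 ltr0Sn. Qed.

Lemma invS_le j k : (j <= k)%N -> iv k <= iv j.
Proof. by move=> jk; rewrite lef_pV2 ?posrE ?ltr0Sn // ler_nat ltnS. Qed.

Lemma invS_le1 j : iv j <= 1.
Proof. by rewrite invf_le1 ?ltr0Sn // ler1n. Qed.

Lemma near_mul_invS_lt (K e : R) : 0 < e -> \forall j \near \oo, K * iv j < e.
Proof.
move=> e_gt0; near=> j.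
rewrite -ltr_pdivlMr ?ltr0Sn // invrK.
apply: le_lt_trans (ler_norm K) _.
rewrite -ltr_pdivrMl // mulrC (@lt_le_trans _ _ j%:R) ?ler_nat //.
by near: j; exact: nbhs_infty_gtr.
Unshelve. all: by end_near.
Qed.

Lemma vcvg_rate k (u : nat -> 'cV[R]_k) x (K : R) :
  (\forall j \near \oo, enorm (u j - x) <= K * iv j) -> vcvg u x.
Proof.
move=> [J _ uJ] e e_gt0; have [M _ KM] := near_mul_invS_lt K e_gt0.
exists (maxn J M) => j; rewrite geq_max => /andP[Jj Mj].
exact: le_lt_trans (uJ j Jj) (KM j Mj).
Qed.

Lemma vcvg_mulmx a b (M : 'M[R]_(a, b)) u z :
  vcvg u z -> vcvg (fun j => M *m u j) (M *m z).
Proof.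
move=> uz e e_gt0.
have M1_gt0 : 0 < enorm M + 1 by rewrite ltr_wpDl ?enorm_ge0.
have [J uJ] := uz _ (divr_gt0 e_gt0 M1_gt0); exists J => j /uJ uj_lt.
rewrite -mulmxBr; apply: le_lt_trans (enorm_mulmx _ _) _.
apply: le_lt_trans (ler_wpM2l (enorm_ge0 M) (ltW uj_lt)) _.
by rewrite mulrCA gtr_pMr // ltr_pdivrMr // mul1r ltrDl.
Qed.

Lemma vcvg_unit_sphere k (u : nat -> 'cV[R]_k) z :
  (forall j, unit_sphere (u j)) -> vcvg u z -> unit_sphere z.
Proof.
move=> u1 uz; apply/eqP; rewrite eq_le; apply/andP.
split; apply/ler_addgt0Pr => e /uz [J /(_ J (leqnn J)) uzJ];
  have := u1 J; rewrite /unit_sphere /= => uJ1.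
- by have := enorm_le_add_dist z (u J); rewrite enorm_distC; lra.
- by have := enorm_le_add_dist (u J) z; lra.
Qed.

Lemma unit_ball_subseq k (u : nat -> 'cV[R]_k) : (forall j, enorm (u j) <= 1) ->
  exists z (phi : nat -> nat), forall j, (j <= phi j)%N /\ enorm (u (phi j) - z) < iv j.
Proof.
move=> u_le1.
pose K := [set v : 'rV[R]_k | forall i, `[-1, 1]%classic (v ord0 i)].
have K_compact : compact K := @rV_compact _ k _ (fun=> @segment_compact R _ _).
have uK : ((fun j => (u j)^T) @ \oo) K.
  exists 0%N => // j _ i; rewrite /= in_itv /= mxE -ler_norml.
  exact: le_trans (enorm_entry_le _ _ _) (u_le1 j).
have [x [_ x_cluster]] := K_compact _ _ uK.
suff near_x e : 0 < e -> forall J, exists j, (J <= j)%N /\ enorm (u j - x^T) < e.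
  have [phi phiP] := choice (fun j => near_x _ (invS_gt0 j) j).
  by exists x^T, phi.
move=> e_gt0 J.
have ek_gt0 : 0 < e / k.+1%:R by rewrite divr_gt0 ?ltr0Sn.
have tail_J : ((fun j => (u j)^T) @ \oo) [set (u j)^T | j in [set j | (J <= j)%N]].
  by exists J => // j Jj; exists j.
have [_ [[j Jj <-] x_uj]] := x_cluster _ _ tail_J (nbhsx_ballx x _ ek_gt0).
exists j; split => //.
apply: le_lt_trans (enorm_le_entries (ltW ek_gt0) _) _.
  move=> i i'; move: x_uj => [_ /(_ ord0 i)]; rewrite (ord1 i') /ball /= !mxE distrC.
  exact: ltW.
rewrite muln1 mulrCA gtr_pMr // ltr_pdivrMr ?ltr0Sn // mul1r ltr_nat.
exact: ltnSn.
Qed.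

Lemma lipschitz_attains_min k (K : set 'cV[R]_k) (f : 'cV[R]_k -> R) (c : R) :
  K !=set0 -> (forall z, K z -> enorm z <= 1) ->
  (forall u z, (forall j, K (u j)) -> vcvg u z -> K z) ->
  (forall z, 0 <= f z) -> 0 <= c -> (forall z z', f z <= f z' + c * enorm (z - z')) ->
  exists2 z0, K z0 & forall z, K z -> f z0 <= f z.
Proof.
move=> [z1 Kz1] K_le1 K_closed f_ge0 c_ge0 f_lip.
have f_inf : has_inf (f @` K) by split; [exists (f z1), z1 | exists 0 => _ [z _ <-]].
have inf_le z : K z -> inf (f @` K) <= f z by move=> Kz; apply: ge_inf f_inf.2 _ _; exists z.
have [u uP] : {u : nat -> 'cV_k & forall j, K (u j) /\ f (u j) < inf (f @` K) + iv j}.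
  apply: (@choice _ _ (fun j y => K y /\ f y < inf (f @` K) + iv j)) => j.
  by have [_ [y Ky <-] ?] := inf_adherent (invS_gt0 j) f_inf; exists y.
have [z [phi phiP]] := unit_ball_subseq (fun j => K_le1 _ (uP j).1).
have Kz : K z.
  apply: (K_closed (u \o phi)) => [j|]; first exact: (uP _).1.
  by apply: (vcvg_rate (K := 1)); exists 0%N => // j _; rewrite mul1r ltW // (phiP j).2.
exists z => // z' Kz'; apply: le_trans (inf_le _ Kz'); apply/ler_addgt0Pr => e e_gt0.
have [J _ /(_ J (leqnn J))] := near_mul_invS_lt (1 + c) e_gt0.
rewrite mulrDl mul1r => J_lt.
apply: le_trans (f_lip z (u (phi J))) _; rewrite enorm_distC.
apply: le_trans (lerD (ltW (uP (phi J)).2) (ler_wpM2l c_ge0 (ltW (phiP J).2))) _.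
rewrite -addrA lerD2l; apply: ltW; apply: le_lt_trans J_lt.
by rewrite lerD2r invS_le // (phiP J).1.
Qed.

End Sequences.

Section SetsOfVectors.
Variables (R : realType) (k : nat).
Implicit Types (x y : 'cV[R]_k) (S : set 'cV[R]_k).

Lemma eclosure_sub S : S `<=` eclosure S.
Proof. by move=> x Sx e e_gt0; exists x; rewrite ?subrr ?enorm0. Qed.

Lemma cone_sub S : S `<=` cone S.
Proof. by move=> x Sx; exists 1; split => //; exists x; rewrite ?scale1r. Qed.

Lemma edist_ge0 x S : (0 <= edist x S)%E.
Proof. by apply: le_ereal_inf_tmp => _ [y _ <-]; rewrite lee_fin enorm_ge0. Qed.

Lemma edist_le x S y : S y -> (edist x S <= (enorm (x - y))%:E)%E.
Proof. by move=> Sy; apply: ereal_inf_lbound; exists y. Qed.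

Lemma edist_fin_num x S : S !=set0 -> edist x S \is a fin_num.
Proof.
move=> [y Sy]; rewrite ge0_fin_numE ?edist_ge0 //.
exact: le_lt_trans (edist_le x Sy) (ltry _).
Qed.

Lemma dist_le x S y : S y -> fine (edist x S) <= enorm (x - y).
Proof.
by move=> Sy; rewrite -lee_fin fineK ?edist_le ?edist_fin_num //; exists y.
Qed.

Lemma dist_approx x S e : S !=set0 -> 0 < e ->
  exists2 y, S y & enorm (x - y) < fine (edist x S) + e.
Proof.
move=> S_neq0 e_gt0.
have : (edist x S < (fine (edist x S) + e)%:E)%E.
  by rewrite -{1}(fineK (edist_fin_num x S_neq0)) lte_fin ltrDl.
by move/ereal_inf_lt => [_ [y Sy <-]]; rewrite lte_fin; exists y.
Qed.

End SetsOfVectors.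

Section LeastSingularValue.
Variables (R : realType) (N m q : nat) (D : set 'cV[R]_N).
Variable Xi : 'cV[R]_N -> 'cV[R]_m -> set 'cV[R]_q.

Lemma lsv_ge0 xi : (0 <= lsv D Xi xi)%E.
Proof.
rewrite /lsv; case: asboolP => _; last exact: leey.
by apply: le_ereal_inf_tmp => _ [z _ <-]; exact: edist_ge0.
Qed.

Lemma lsv_eq0 xi z : D xi -> unit_sphere z -> Xi xi z 0 -> lsv D Xi xi = 0%E.
Proof.
move=> Dxi z1 Xi0; apply/le_anti; rewrite lsv_ge0 andbT /lsv asboolT //.
apply: ge_ereal_inf; exists (edist 0 (Xi xi z)); first by exists z.
by have := edist_le 0 Xi0; rewrite subrr enorm0.
Qed.

Lemma subderiv_lsv_lt xi w (L : R) : lsv D Xi xi = 0%E ->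
  (subderiv (lsv D Xi) xi w < L%:E)%E -> forall d : R, 0 < d ->
  exists tau w' z y, [/\ 0 < tau, tau < d, enorm (w' - w) < d, D (xi + tau *: w') &
    [/\ unit_sphere z, Xi (xi + tau *: w') z y & enorm y < L * tau]].
Proof.
move=> lsv0 sdL d d_gt0.
have /ereal_inf_lt [_ [tau [w' [tau_gt0 tau_lt w'_near ->]]]] :
    (ereal_inf [set r | exists (tau : R) (w' : 'cV[R]_N),
       [/\ (0 < tau)%R, (tau < d)%R, (enorm (w' - w) < d)%R &
       r = ((lsv D Xi (xi + tau *: w') - lsv D Xi xi) * tau^-1%:E)%E]] < L%:E)%E.
  by apply: le_lt_trans sdL; apply: ereal_sup_ubound; exists d.
rewrite lsv0 sube0 /lsv; case: asboolP => [Dxi'|_]; last first.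
  by rewrite gt0_mulye ?lte_fin ?invr_gt0 // ltNge leey.
move=> /= lsv_lt; exists tau, w'.
have : (ereal_inf [set edist 0 (Xi (xi + tau *: w') z) | z in @unit_sphere R m] <
    (L * tau)%:E)%E.
  move: lsv_lt; case: (ereal_inf _) => [r | | ] //=.
  - by rewrite -EFinM lte_fin ltr_pdivrMr.
  - by rewrite gt0_mulye ?lte_fin ?invr_gt0 // ltNge leey.
  - by rewrite ltNyr.
move/ereal_inf_lt => [_ [z z1 <-]] /ereal_inf_lt [_ [y Xiy <-]].
by rewrite lte_fin sub0r enormN => y_lt; exists z, y.
Qed.

End LeastSingularValue.

Lemma semideriv_seq (R : realType) (N q m : nat) (A : 'cV[R]_N -> 'M[R]_(q, m))
    xi w L (tau : nat -> R) (W : nat -> 'cV[R]_N) (e : R) :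
  is_semideriv A xi w L -> (forall j, 0 < tau j < (j.+1%:R)^-1) ->
  (forall j, enorm (W j - w) < (j.+1%:R)^-1) -> 0 < e ->
  \forall j \near \oo, enorm ((tau j)^-1 *: (A (xi + tau j *: W j) - A xi) - L) < e.
Proof.
move=> L_semideriv tauP WP e_gt0; have [d d_gt0 dP] := L_semideriv e e_gt0.
have [J _ Jd] := near_mul_invS_lt 1 d_gt0.
exists J => // j /Jd; rewrite mul1r => ivd; have /andP[tau_gt0 tau_lt] := tauP j.
by apply: dP => //; apply: lt_trans ivd; [exact: tau_lt | exact: WP].
Qed.

Section SingularPoint.
Variables (R : realType) (N m q : nat) (D : set 'cV[R]_N).
Variables (Gam : 'cV[R]_N -> 'cV[R]_m -> set 'cV[R]_q) (A : 'cV[R]_N -> 'M[R]_(q, m)).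
Variables (xib : 'cV[R]_N) (Aw : 'M[R]_(q, m)).

Let Xi := XiMap A Gam.
Let H := Gam xib.
Let Z := @unit_sphere R m `&` sdom H.
Let Z0 := [set z | Z z /\ XiMap A Gam xib z 0].
Let Theta := eclosure (cone (\bigcup_(z in Z) H z)).
Let AdomH := [set A xib *m z | z in sdom H].
Let S z := msum (msum [set Aw *m z] Theta) AdomH.
Let g z := fine (edist 0 (S z)).

Hypothesis Dxib : D xib.
Hypothesis H_homogeneous : pos_homogeneous H.
Hypothesis xib_singular : singular D Xi xib.
Hypothesis Gam_osc : outer_semicontinuous D Gam.
Hypothesis AdomH_Theta : forall y, AdomH y -> Theta (- y) -> y = 0.

Lemma Theta_of_H z y : Z z -> H z y -> Theta y.
Proof. by move=> Zz Hzy; apply/eclosure_sub/cone_sub; exists z. Qed.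

Lemma Z0_of_H_opp z : unit_sphere z -> H z (- (A xib *m z)) -> Z0 z /\ A xib *m z = 0.
Proof.
move=> z1 Hz; have Zz : Z z by split => //; exists (- (A xib *m z)).
have Az0 : A xib *m z = 0.
  by apply: AdomH_Theta; [exists z => //; case: Zz | exact: Theta_of_H Hz].
by split => //; split => //; exists (- (A xib *m z)); rewrite ?subrr.
Qed.

Lemma Z0_kernel z : Z0 z -> A xib *m z = 0 /\ H z 0.
Proof.
move=> [[z1 _] [y Hy Azy0]].
have y_eq : y = - (A xib *m z) by apply/eqP; rewrite -addr_eq0 addrC Azy0.
rewrite y_eq in Hy; have [_ Az0] := Z0_of_H_opp z1 Hy.
by rewrite Az0 oppr0 in Hy.
Qed.

Lemma Z0_neq0 : Z0 !=set0.
Proof.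
have [_ [z [z_neq0 [y Hy Azy0]]]] := xib_singular.
have z_gt0 : 0 < enorm z.
  by rewrite lt_neqAle enorm_ge0 andbT eq_sym; apply: contra z_neq0 => /eqP/enorm_eq0->.
have r_gt0 : 0 < (enorm z)^-1 by rewrite invr_gt0.
have z1 : unit_sphere ((enorm z)^-1 *: z).
  by rewrite /unit_sphere /= enormZ gtr0_norm // mulVf ?gt_eqF.
exists ((enorm z)^-1 *: z); apply: (proj1 (Z0_of_H_opp z1 _)).
rewrite H_homogeneous //; exists y => //.
by rewrite -scalemxAr -scalerN; congr (_ *: _); apply/eqP; rewrite -addr_eq0 addrC Azy0.
Qed.

Lemma Z0_of_limit (X : nat -> 'cV[R]_N) (ze : nat -> 'cV[R]_m) (G : nat -> 'cV[R]_q) z :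
  (forall j, D (X j)) -> vcvg X xib -> (forall j, unit_sphere (ze j)) -> vcvg ze z ->
  (forall j, Gam (X j) (ze j) (G j)) -> vcvg G (- (A xib *m z)) ->
  Z0 z /\ A xib *m z = 0.
Proof.
move=> DX Xcvg ze1 zecvg GamG Gcvg.
apply: Z0_of_H_opp; first exact: vcvg_unit_sphere ze1 zecvg.
by apply: (Gam_osc Dxib); exists X, ze, G; do !split.
Qed.

Lemma Z0_closed (u : nat -> 'cV[R]_m) z : (forall j, Z0 (u j)) -> vcvg u z -> Z0 z.
Proof.
move=> Z0u ucvg.
apply: (proj1 (@Z0_of_limit (fun=> xib) u (fun j => - A xib *m u j) z _ _ _ _ _ _)) => //.
- by move=> e e_gt0; exists 0%N => j _; rewrite subrr enorm0.
- by move=> j; have [[]] := Z0u j.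
- by move=> j; have [Au0 Hu0] := Z0_kernel (Z0u j); rewrite mulNmx Au0 oppr0.
- by rewrite -mulNmx; exact: vcvg_mulmx.
Qed.

Lemma S_Aw z : S z (Aw *m z).
Proof.
have [z1 Z0z1] := Z0_neq0; have [Az1 Hz10] := Z0_kernel Z0z1.
have Theta0 : Theta 0 by apply: Theta_of_H Hz10; case: Z0z1.
have AdomH0 : AdomH 0 by rewrite -Az1; exists z1 => //; exists 0.
by exists (Aw *m z); [exists (Aw *m z) => //; exists 0 | exists 0]; rewrite ?addr0.
Qed.

Lemma g_ge0 z : 0 <= g z.
Proof. by rewrite /g fine_ge0 ?edist_ge0. Qed.

Lemma g_lipschitz z z' : g z <= g z' + enorm Aw * enorm (z - z').
Proof.
apply/ler_addgt0Pr => e e_gt0.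
have [_ [_ [_ -> [t Tt ->]] [b Ab ->]] y_lt] : exists2 y, S z' y & enorm (0 - y) < g z' + e.
  exact: dist_approx (ex_intro _ _ (S_Aw z')) e_gt0.
have Sz : S z (Aw *m z + t + b).
  by exists (Aw *m z + t); [exists (Aw *m z) => //; exists t | exists b].
apply: le_trans (dist_le 0 Sz) _.
apply: le_trans (enorm_le_add_dist _ (0 - (Aw *m z' + t + b))) _.
have -> : 0 - (Aw *m z + t + b) - (0 - (Aw *m z' + t + b)) = Aw *m (z' - z).
  rewrite mulmxBr; move: (Aw *m z) (Aw *m z') => P Q.
  by apply/matrixP => i j; rewrite !mxE; ring.
have := enorm_mulmx Aw (z' - z); rewrite (enorm_distC z').
lra.
Qed.

Lemma g_min_Z0 : exists2 z0, Z0 z0 & forall z, Z0 z -> g z0 <= g z.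
Proof.
apply: (lipschitz_attains_min Z0_neq0 _ Z0_closed g_ge0 (enorm_ge0 Aw) g_lipschitz).
by move=> z [[z1 _] _]; rewrite z1.
Qed.

Lemma g_le_quotient (tau : R) (B : 'M[R]_(q, m)) z y h :
  0 < tau -> unit_sphere z -> H z h ->
  g z <= tau^-1 * enorm (B *m z + y) + enorm (tau^-1 *: (B - A xib) - Aw)
         + tau^-1 * enorm (y - h).
Proof.
move=> tau_gt0 z1 Hzh; have itau_gt0 : 0 < tau^-1 by rewrite invr_gt0.
have Sz : S z (Aw *m z + tau^-1 *: h + A xib *m (tau^-1 *: z)).
  exists (Aw *m z + tau^-1 *: h).
    exists (Aw *m z) => //; exists (tau^-1 *: h) => //.
    apply: eclosure_sub; exists tau^-1; split; first exact: ltW.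
    by exists h => //; exists z => //; split => //; exists h.
  exists (A xib *m (tau^-1 *: z)) => //; exists (tau^-1 *: z) => //.
  by exists (tau^-1 *: h); rewrite H_homogeneous //; exists h.
apply: le_trans (dist_le 0 Sz) _.
have -> : 0 - (Aw *m z + tau^-1 *: h + A xib *m (tau^-1 *: z)) =
    - (tau^-1 *: (B *m z + y) - (tau^-1 *: (B - A xib) - Aw) *m z - tau^-1 *: (y - h)).
  rewrite mulmxBl -scalemxAl mulmxBl -scalemxAr.
  move: (B *m z) (A xib *m z) (Aw *m z) => P Q T.
  by apply/matrixP => i j; rewrite !mxE; ring.
rewrite enormN; apply: le_trans (enormB_le _ _) _; rewrite !enormZ gtr0_norm //.
rewrite lerD2r; apply: le_trans (enormB_le _ _) _; rewrite enormZ gtr0_norm // lerD2l.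
by apply: le_trans (enorm_mulmx _ _) _; rewrite (z1 : enorm z = 1) mulr1.
Qed.

Variables (w : 'cV[R]_N) (c : R).
Hypothesis Aw_semideriv : is_semideriv A xib w Aw.
Hypothesis c_ge0 : 0 <= c.
Hypothesis Gam_calm : forall z, Z0 z -> exists (eps delta : R), 0 < eps /\ 0 < delta /\
  forall xi z', D xi -> unit_sphere z' -> pnorm (xi - xib) (z' - z) <= eps ->
    forall y, Gam xi z' y -> enorm y <= delta ->
      exists2 y', Gam xib z' y' & enorm (y - y') <= c * enorm (xi - xib).

Local Notation iv j := (((j.+1)%:R : R)^-1).

(* Near-minimizers of the difference quotients of [lsv] at [xib] in direction [w], with
   [Gam]-part [G] and unit vectors [ze] already extracted to converge to [z]. *)
Let witness_seq (L : R) tau W ze G z := forall j,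
  [/\ 0 < tau j < iv j, enorm (W j - w) < iv j, D (xib + tau j *: W j),
      [/\ unit_sphere (ze j), Gam (xib + tau j *: W j) (ze j) (G j) &
          enorm (A (xib + tau j *: W j) *m ze j + G j) < L * tau j]
    & enorm (ze j - z) < iv j].

Lemma subderiv_lt_witness_seq (L : R) : (subderiv (lsv D Xi) xib w < L%:E)%E ->
  exists tau W ze G z, witness_seq L tau W ze G z.
Proof.
move=> sdL.
have lsv0 : lsv D Xi xib = 0%E.
  by have [z0 [[z1 _] Xi0]] := Z0_neq0; exact: lsv_eq0 Dxib z1 Xi0.
pose P k (p : R * 'cV[R]_N * 'cV[R]_m * 'cV[R]_q) :=
  let: (tau, w', z, y) := p in
  [/\ 0 < tau < iv k, enorm (w' - w) < iv k, D (xib + tau *: w') &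
      [/\ unit_sphere z, Gam (xib + tau *: w') z y &
          enorm (A (xib + tau *: w') *m z + y) < L * tau]].
have witness k : exists p, P k p.
  have [tau [w' [z [_ [tau_gt0 tau_lt w'_near DX [z1 [y Gy <-] y_lt]]]]]] :=
    subderiv_lsv_lt lsv0 sdL (invS_gt0 R k).
  by exists (tau, w', z, y); split => //; apply/andP.
have [F FP] := choice witness.
have [z [phi phiP]] : exists z (phi : nat -> nat),
    forall j, (j <= phi j)%N /\ enorm ((F (phi j)).1.2 - z) < iv j.
  apply: (unit_ball_subseq (u := fun k => (F k).1.2)) => k.
  by move: (FP k); case: (F k) => [[[tau w'] z] y] [_ _ _ [z1 _ _]]; rewrite z1.
exists (fun j => (F (phi j)).1.1.1), (fun j => (F (phi j)).1.1.2).
exists (fun j => (F (phi j)).1.2), (fun j => (F (phi j)).2), z => j.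
have [phi_ge ze_near] := phiP j; have iv_le := invS_le R phi_ge.
move: (FP (phi j)) ze_near; case: (F (phi j)) => [[[tau w'] z'] y] /=.
case=> /andP[tau_gt0 tau_lt] w'_near DX zyP ze_near.
split => //; first by rewrite tau_gt0 (lt_le_trans tau_lt iv_le).
exact: lt_le_trans w'_near iv_le.
Qed.

Section WitnessSequence.
Variables (L : R) (tau : nat -> R) (W : nat -> 'cV[R]_N).
Variables (ze : nat -> 'cV[R]_m) (G : nat -> 'cV[R]_q) (z : 'cV[R]_m).
Hypothesis witnessP : witness_seq L tau W ze G z.

Let tauP j : 0 < tau j < iv j. Proof. by case: (witnessP j). Qed.
Let WP j : enorm (W j - w) < iv j. Proof. by case: (witnessP j). Qed.

Lemma witness_W_le j : enorm (W j) <= enorm w + iv j.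
Proof. by have := enorm_le_add_dist (W j) w; have := WP j; move: (iv j) => r; lra. Qed.

Lemma witness_X_near j : enorm (xib + tau j *: W j - xib) <= (enorm w + 1) * iv j.
Proof.
have /andP[tau_gt0 tau_lt] := tauP j.
rewrite addrC addKr enormZ gtr0_norm // [X in _ <= X]mulrC.
apply: ler_pM; [exact: ltW | exact: enorm_ge0 | exact: ltW |].
by apply: le_trans (witness_W_le j) _; rewrite lerD2l invS_le1.
Qed.

Lemma witness_G_near :
  \forall j \near \oo, enorm (G j + A xib *m z) <= (L + enorm Aw + 1 + enorm (A xib)) * iv j.
Proof.
have [J _ E_lt1] := semideriv_seq Aw_semideriv tauP WP ltr01.
exists J => // j /E_lt1; set X := xib + tau j *: W j; set E := _ - Aw => E_lt.
have [/andP[tau_gt0 tau_lt] _ _ [z1 _ AG_lt] ze_near] := witnessP j.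
have L_ge0 : 0 <= L.
  by rewrite -(pmulr_lge0 _ tau_gt0); exact: ltW (le_lt_trans (enorm_ge0 _) AG_lt).
have AX_eq : A X - A xib = tau j *: (Aw + E).
  by rewrite /E addrCA subrr addr0 scalerA mulfV ?gt_eqF // scale1r.
have -> : G j + A xib *m z =
    (A X *m ze j + G j) - (A X - A xib) *m ze j - A xib *m (ze j - z).
  rewrite mulmxBl mulmxBr; move: (A X *m ze j) (A xib *m ze j) (A xib *m z) => P Q T.
  by apply/matrixP => a b; rewrite !mxE; ring.
have b1 : enorm (A X *m ze j + G j) <= L * iv j.
  exact: ltW (lt_le_trans AG_lt (ler_wpM2l L_ge0 (ltW tau_lt))).
have b2 : enorm ((A X - A xib) *m ze j) <= (enorm Aw + 1) * iv j.
  apply: le_trans (enorm_mulmx _ _) _.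
  rewrite (z1 : enorm (ze j) = 1) mulr1 AX_eq enormZ gtr0_norm // [X in _ <= X]mulrC.
  apply: ler_pM; [exact: ltW | exact: enorm_ge0 | exact: ltW |].
  by apply: le_trans (enormD _ _) _; rewrite lerD2l ltW.
have b3 : enorm (A xib *m (ze j - z)) <= enorm (A xib) * iv j.
  exact: le_trans (enorm_mulmx _ _) (ler_wpM2l (enorm_ge0 _) (ltW ze_near)).
apply: le_trans (enormB_le _ _) _; apply: le_trans (lerD (enormB_le _ _) b3) _.
rewrite !mulrDl mul1r; move: (iv j) => r in b1 b2 b3 *; lra.
Qed.

Lemma witness_limit_Z0 : Z0 z /\ A xib *m z = 0.
Proof.
apply: (@Z0_of_limit (fun j => xib + tau j *: W j) ze G z).
- by move=> j; case: (witnessP j).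
- by apply: (vcvg_rate (K := enorm w + 1)); exists 0%N => // j _; exact: witness_X_near.
- by move=> j; case: (witnessP j) => _ _ _ [].
- apply: (vcvg_rate (K := 1)); exists 0%N => // j _.
  by rewrite mul1r; case: (witnessP j) => _ _ _ _ /ltW.
- by move=> j; case: (witnessP j) => _ _ _ [].
- apply: (vcvg_rate (K := L + enorm Aw + 1 + enorm (A xib))).
  by apply: filterS witness_G_near => j G_near; rewrite opprK.
Qed.

Lemma witness_eventually_close (eps delta e : R) : 0 < eps -> 0 < delta -> 0 < e ->
  exists j,
  [/\ enorm ((tau j)^-1 *: (A (xib + tau j *: W j) - A xib) - Aw) < e,
      pnorm (xib + tau j *: W j - xib) (ze j - z) <= eps, enorm (G j) <= delta,
      c * iv j < e & enorm Aw * iv j < e].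
Proof.
move=> eps_gt0 delta_gt0 e_gt0; have [_ Az0] := witness_limit_Z0.
apply: (@filter_ex _ \oo); near=> j; split.
- by near: j; exact: semideriv_seq Aw_semideriv tauP WP e_gt0.
- apply: le_trans (pnorm_le _ _) _; have [_ _ _ _ /ltW ze_near] := witnessP j.
  apply: le_trans (lerD (witness_X_near j) ze_near) _.
  rewrite -[X in _ + X]mul1r -mulrDl -addrA; apply: ltW.
  by near: j; exact: near_mul_invS_lt.
- have -> : G j = G j + A xib *m z by rewrite Az0 addr0.
  apply: le_trans (_ : _ <= (L + enorm Aw + 1 + enorm (A xib)) * iv j) _.
    by near: j; exact: witness_G_near.
  by apply: ltW; near: j; exact: near_mul_invS_lt.
- by near: j; exact: near_mul_invS_lt.
- by near: j; exact: near_mul_invS_lt.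
Unshelve. all: by end_near.
Qed.

Lemma witness_g_le : g z <= L + c * enorm w.
Proof.
have [Z0z _] := witness_limit_Z0.
have [eps [delta [eps_gt0 [delta_gt0 calm]]]] := Gam_calm Z0z.
apply/ler_addgt0Pr => e e_gt0; have e3_gt0 : 0 < e / 3 by rewrite divr_gt0.
have [j [E_lt X_near G_le c_lt Aw_lt]] := witness_eventually_close eps_gt0 delta_gt0 e3_gt0.
have [/andP[tau_gt0 _] _ DX [z1 GX AG_lt] ze_near] := witnessP j.
have [h Hh Gh_le] := calm _ _ DX z1 X_near _ GX G_le.
have gq := g_le_quotient (A (xib + tau j *: W j)) (G j) tau_gt0 z1 Hh.
have b1 : (tau j)^-1 * enorm (A (xib + tau j *: W j) *m ze j + G j) <= L.
  by rewrite mulrC ler_pdivrMr // ltW.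
have b2 : (tau j)^-1 * enorm (G j - h) <= c * enorm w + c * iv j.
  have itau_ge0 : 0 <= (tau j)^-1 by rewrite invr_ge0 ltW.
  apply: le_trans (ler_wpM2l itau_ge0 Gh_le) _.
  rewrite addrC addKr enormZ gtr0_norm // mulrCA mulKf ?gt_eqF // -mulrDr.
  by apply: ler_wpM2l => //; exact: witness_W_le.
have b3 := ler_wpM2l (enorm_ge0 Aw) (ltW ze_near).
have := g_lipschitz z (ze j); rewrite enorm_distC.
move: (iv j) => r in b2 b3 c_lt Aw_lt *; lra.
Qed.

End WitnessSequence.

Lemma g_le_subderiv z0 : (forall z, Z0 z -> g z0 <= g z) ->
  ((g z0)%:E <= subderiv (lsv D Xi) xib w + (c * enorm w)%:E)%E.
Proof.
move=> z0_min; rewrite leNgt; apply/negP => sd_lt.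
have [L [L_lt sdL]] : exists L : R,
    L + c * enorm w < g z0 /\ (subderiv (lsv D Xi) xib w < L%:E)%E.
  move: sd_lt; case: (subderiv _ _ _) => [s | | ] /=.
  - rewrite -EFinD lte_fin => s_lt; exists ((s + (g z0 - c * enorm w)) / 2).
    by split; [lra | rewrite lte_fin; lra].
  - by rewrite ltNge leey.
  - by move=> _; exists (g z0 - c * enorm w - 1); split; [lra | exact: ltNyr].
have [tau [W [ze [G [z wP]]]]] := subderiv_lt_witness_seq sdL.
have [Z0z _] := witness_limit_Z0 wP.
by have := z0_min _ Z0z; have := witness_g_le wP; lra.
Qed.

End SingularPoint.

Theorem theorem2 (R : realType) (n p m q : nat)
  (U D : set 'cV[R]_(n + p))
  (Gam : 'cV[R]_(n + p) -> 'cV[R]_m -> set 'cV[R]_q)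
  (A : 'cV[R]_(n + p) -> 'M[R]_(q, m))
  (xib w : 'cV[R]_(n + p)) (Aw : 'M[R]_(q, m)) (c : R) :
  is_open U -> D `<=` U -> D !=set0 ->
  (forall xi, D xi -> pos_homogeneous (Gam xi)) ->
  D xib ->
  let Xi := XiMap A Gam in
  let H := Gam xib in
  let Z := @unit_sphere R m `&` sdom H in
  let Z0 := [set z | Z z /\ XiMap A Gam xib z 0] in
  let Theta := eclosure (cone (\bigcup_(z in Z) H z)) in
  let AdomH := [set A xib *m z | z in sdom H] in
  (* (i) *) singular D Xi xib ->
  (* (ii) *) outer_semicontinuous D Gam ->
  (* (iii) *) semidifferentiable A xib w ->
  is_semideriv A xib w Aw ->
  (* (iv) *) is_closed AdomH ->
  (* (v) *) 0 <= c ->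
  (forall z, Z0 z -> exists (eps delta : R), 0 < eps /\ 0 < delta /\
     forall xi z', D xi -> unit_sphere z' -> pnorm (xi - xib) (z' - z) <= eps ->
       forall y, Gam xi z' y -> enorm y <= delta ->
         exists2 y', Gam xib z' y' & enorm (y - y') <= c * enorm (xi - xib)) ->
  (* (vi) *) (forall y, AdomH y -> Theta (- y) -> y = 0) ->
  let f := fun z => edist 0 (msum (msum [set Aw *m z] Theta) AdomH) in
  exists2 z0, Z0 z0 &
    (forall z, Z0 z -> (f z0 <= f z)%E) /\
    (f z0 <= subderiv (lsv D Xi) xib w + (c * enorm w)%:E)%E.
Proof.
move=> _ _ _ Gam_hom Dxib Xi H Z Z0 Theta AdomH xib_singular Gam_osc _ Aw_semideriv _
  c_ge0 Gam_calm AdomH_Theta f.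
have H_hom := Gam_hom _ Dxib.
have f_fin z : f z = (fine (f z))%:E.
  rewrite fineK // edist_fin_num //; exists (Aw *m z).
  exact: S_Aw H_hom xib_singular AdomH_Theta z.
have [z0 Z0z0 z0_min] := g_min_Z0 Aw Dxib H_hom xib_singular Gam_osc AdomH_Theta.
exists z0 => //; split => [z Z0z|]; rewrite (f_fin z0).
  by rewrite (f_fin z) lee_fin z0_min.
exact (g_le_subderiv Dxib H_hom xib_singular Gam_osc AdomH_Theta Aw_semideriv c_ge0
  Gam_calm z0_min).
Qed.
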